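(* Let $T=(V,E)$ be a tree with $\mathrm{pthin}(T)=2$, and let $\sigma$ be an ordering of $V$ and $S=\{V^0,V^1\}$ a partition of $V$ that are strongly consistent. Let $v_1,v_2,v_3$ be vertices with $v_1<v_2<v_3$ and $\deg(v_2)\ge 4$. Then there is no vertex $v_0$ that is the nexus between $v_1,v_2,v_3$.
   Context: For a graph $G=(V,E)$, a linear ordering $<$ of $V$ and a partition of $V$ into classes are called strongly consistent if for every triple $r<s<t$ of vertices with $rt\in E$: if $r$ and $s$ belong to the same class then $st\in E$, and if $s$ and $t$ belong to the same class then $rs\in E$. The proper thinness $\mathrm{pthin}(G)$ is the minimum $k$ such that some ordering and some partition into $k$ classes are strongly consistent. For distinct vertices $v_0,v_1,v_2,v_3$ of a tree $T$, let $C_i$ be the unique simple path from $v_0$ to $v_i$ ($i=1,2,3$) and $C_i'$ its vertex set minus $v_0$; $v_0$ is the nexus between $v_1,v_2,v_3$ if $C_1',C_2',C_3'$ are pairwise disjoint. *)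

From mathcomp Require Import all_boot.
Set Implicit Arguments. Unset Strict Implicit. Unset Printing Implicit Defensive.

Definition simple_graph (T : finType) (e : rel T) : Prop :=
  symmetric e /\ irreflexive e.

Definition connected_graph (T : finType) (e : rel T) : Prop :=
  forall x y : T, connect e x y.

Definition acyclic (T : finType) (e : rel T) : Prop :=
  ~ exists (x : T) (p : seq T),
      [/\ uniq (x :: p), 2 <= size p, path e x p & e (last x p) x].

Definition is_tree (T : finType) (e : rel T) : Prop :=
  [/\ simple_graph e, connected_graph e & acyclic e].

Definition deg (T : finType) (e : rel T) (v : T) : nat := #|[set u | e v u]|.

(* A linear ordering of V is encoded by an injective rank function rk : T -> nat
   (r < s iff rk r < rk s); a partition into classes by a class map cls. *)
Definition strongly_consistent (T : finType) (C : eqType) (e : rel T)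
    (rk : T -> nat) (cls : T -> C) : Prop :=
  forall r s t : T, rk r < rk s -> rk s < rk t -> e r t ->
    (cls r = cls s -> e s t) /\ (cls s = cls t -> e r s).

Definition pthin_le (T : finType) (e : rel T) (k : nat) : Prop :=
  exists (rk : T -> nat) (cls : T -> 'I_k),
    injective rk /\ strongly_consistent e rk cls.

Definition pthin_eq (T : finType) (e : rel T) (k : nat) : Prop :=
  pthin_le e k /\ (forall j, pthin_le e j -> k <= j).

(* v0 is the nexus between v1 v2 v3 (all four distinct): the simple paths
   C_i = v0 :: p_i from v0 to v_i have pairwise disjoint C_i' = p_i. *)
Definition simple_path_from (T : finType) (e : rel T) (u v : T) (p : seq T) : Prop :=
  [/\ path e u p, last u p = v & uniq (u :: p)].

Definition nexus (T : finType) (e : rel T) (v0 v1 v2 v3 : T) : Prop :=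
  uniq [:: v0; v1; v2; v3] /\
  exists p1 p2 p3 : seq T,
    [/\ simple_path_from e v0 v1 p1, simple_path_from e v0 v2 p2,
        simple_path_from e v0 v3 p3 &
     [/\ all (fun x => x \notin p2) p1,
        all (fun x => x \notin p3) p1 & all (fun x => x \notin p3) p2]].

From mathcomp Require Import all_boot zify.
Set Implicit Arguments. Unset Strict Implicit. Unset Printing Implicit Defensive.

(* Call a vertex far from v if it is neither v nor a neighbour of v.  With two
   classes, strong consistency lets at most one neighbour of v on each side of v
   share the class of v.  If an edge xy of far vertices jumps over v
   (x < v < y), then x and y share a class different from that of v, and every
   neighbour of v not adjacent to x or y is forced into the class of v; in a tree
   at most one neighbour of v touches xy, so deg v <= 3.  In the nexus, the
   branches towards v1 and v3 consist of far vertices (tree), so the one starting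
   on the other side of v2 than its endpoint contains such a jumping edge, unless
   v0 is a neighbour of v2 and the branches leave v0 through x < v2 < y.  In that
   fork every neighbour of v2 other than v0 is again forced into the class of v2. *)

Lemma I2_eq_of_neq (a b c : 'I_2) : a != b -> a != c -> b = c.
Proof. by case: a b c => [[|[|?]] ?] [[|[|?]] ?] [[|[|?]] ?] //= _ _; apply: val_inj. Qed.

Lemma all_notin_sym (T : eqType) (p q : seq T) :
  all (fun z => z \notin q) p -> all (fun z => z \notin p) q.
Proof.
move=> d; apply/allP => z zq; apply/negP => zp.
by move/allP: d => /(_ z zp); rewrite zq.
Qed.

Section Tree.
Variables (T : finType) (e : rel T).
Hypotheses (sym_e : symmetric e) (irr_e : irreflexive e) (acyc_e : acyclic e).

Lemma edge_neq a b : e a b -> a != b.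
Proof. by apply: contraTneq => ->; rewrite irr_e. Qed.

Lemma neq_of_edge_nonedge a b c : e a b -> ~~ e a c -> b != c.
Proof. by move=> ab; apply: contraNneq => <-. Qed.

Lemma no_triangle a b c : e a b -> e b c -> e c a -> False.
Proof.
move=> ab bc ca; apply: acyc_e; exists a, [:: b; c]; rewrite /= ab bc ca.
by rewrite !inE !negb_or (edge_neq ab) (edge_neq bc) [a == c]eq_sym (edge_neq ca).
Qed.

Lemma common_neighbor_unique a b c d :
  e a b -> e b c -> e a d -> e d c -> a != c -> b = d.
Proof.
move=> ab bc ad dc ac; case: (eqVneq b d) => // bd; case: acyc_e.
exists a, [:: b; c; d]; rewrite /= ab bc (sym_e c d) dc (sym_e d a) ad.
rewrite !inE !negb_or ac bd (edge_neq ab) (edge_neq bc) (edge_neq ad).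
by rewrite [c == d]eq_sym (edge_neq dc).
Qed.

Lemma no_pentagon a b c d f : e a b -> e b c -> e c d -> e d f -> e f a ->
  a != c -> a != d -> b != d -> b != f -> c != f -> False.
Proof.
move=> ab bc cd df fa ac ad bd bf cf; apply: acyc_e.
exists a, [:: b; c; d; f]; rewrite /= ab bc cd df fa.
rewrite !inE !negb_or ac ad bd bf cf (edge_neq ab) (edge_neq bc) (edge_neq cd).
by rewrite (edge_neq df) [a == f]eq_sym (edge_neq fa).
Qed.

Lemma neighbors_touching_edge_le1 v x y : e x y -> v != x -> v != y ->
  ~~ e v x -> ~~ e v y -> #|[set u | e v u] :&: [set u | e u x || e u y]| <= 1.
Proof.
move=> xy vx vy nvx nvy; apply/card_le1_eqP => u u'.
rewrite !inE => /andP [vu hu] /andP [vu' hu']; case: (eqVneq u u') => // uu'; exfalso.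
have u'v : e u' v by rewrite sym_e.
have [ux uy] := (neq_of_edge_nonedge vu nvx, neq_of_edge_nonedge vu nvy).
have [u'x u'y] := (neq_of_edge_nonedge vu' nvx, neq_of_edge_nonedge vu' nvy).
case/orP: hu => hu; case/orP: hu' => hu'.
- by move/eqP: uu'; apply; exact: (common_neighbor_unique vu hu vu' hu').
- apply: (no_pentagon vu hu xy _ u'v) => //; first by rewrite sym_e.
  by rewrite eq_sym.
- apply: (no_pentagon vu hu (_ : e y x) (_ : e x u') u'v) => //; try by rewrite sym_e.
  by rewrite eq_sym.
- by move/eqP: uu'; apply; exact: (common_neighbor_unique vu hu vu' hu').
Qed.

Lemma disjoint_paths_ends_nonadj x p q :
  path e x p -> path e x q -> uniq (x :: p) -> uniq (x :: q) ->
  all (fun z => z \notin q) p -> p != [::] -> q != [::] ->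
  ~~ e (last x p) (last x q).
Proof.
move=> pp pq up uq dis pn; case/lastP: q pq uq dis => [//|q z] pq uq dis _.
rewrite last_rcons; apply/negP => el; apply: acyc_e.
exists z, (rcons (rev q) x ++ p); split.
- rewrite -rev_cons -cat_cons -rev_rcons cat_uniq rev_uniq uq /=.
  move: up => /= /andP [xp ->]; rewrite andbT.
  apply/hasPn => u up; rewrite mem_rev inE negb_or.
  by rewrite (contraNneq _ xp) => [|<-//]; move/allP: dis => /(_ u up).
- by rewrite size_cat size_rcons addSn ltnS addn_gt0 orbC lt0n size_eq0 pn.
- rewrite cat_path last_rcons pp andbT.
  move: pq; rewrite -(eq_path (e := fun a b => e b a)) => [|??]; last exact: sym_e.
  by rewrite -rev_path last_rcons belast_rcons rev_cons.
- by rewrite last_cat last_rcons.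
Qed.

Lemma disjoint_paths_nonadj x p q u :
  path e x p -> path e x q -> uniq (x :: p) -> uniq (x :: q) ->
  all (fun z => z \notin q) p -> q != [::] -> u \in p -> ~~ e u (last x q).
Proof.
move=> + + + + + qn up'; case/path.splitP: up' => p1 p2.
rewrite cat_path -cat_cons cat_uniq all_cat => /andP [pp _] pq /andP [up _] uq.
case/andP=> dis _; rewrite -(last_rcons x p1 u).
by apply: (disjoint_paths_ends_nonadj pp pq up uq dis _ qn); case: (p1).
Qed.

Lemma disjoint_branch_avoids x p q w :
  simple_path_from e x w q -> path e x p -> uniq (x :: p) -> x != w ->
  all (fun z => z \notin q) p -> all (fun u => (u != w) && ~~ e w u) p.
Proof.
case=> pq <- uq pp up xw dis; have qn : q != [::] by apply: contraNneq xw => ->.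
have wq : last x q \in q by have := mem_last x q; rewrite inE eq_sym (negbTE xw).
apply/allP => u uin; rewrite sym_e (disjoint_paths_nonadj pp pq up uq dis qn uin).
rewrite andbT; apply: contraTneq uin => ->; apply/negP => wp.
by move/allP: dis => /(_ _ wp); rewrite wq.
Qed.

End Tree.

(* [strongly_consistent e rk cls] is [order_consistent e (fun a b => rk a < rk b) cls];
   keeping the order abstract allows reversing it. *)
Definition order_consistent (T : finType) (C : eqType) (e lt : rel T)
    (cls : T -> C) : Prop :=
  forall r s t, lt r s -> lt s t -> e r t ->
    (cls r = cls s -> e s t) /\ (cls s = cls t -> e r s).

Lemma order_consistent_rev (T : finType) (C : eqType) (e lt : rel T) (cls : T -> C) :
  symmetric e -> order_consistent e lt cls ->
  order_consistent e (fun a b => lt b a) cls.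
Proof.
move=> sym_e sc r s t rs st rt; rewrite sym_e in rt.
have [h1 h2] := sc t s r st rs rt.
by split=> /esym h; rewrite sym_e; [apply: h2 | apply: h1].
Qed.

Section Order.
Variables (T : finType) (e lt : rel T) (cls : T -> 'I_2).
Hypotheses (sym_e : symmetric e) (irr_e : irreflexive e) (acyc_e : acyclic e).
Hypotheses (lt_irr : irreflexive lt) (lt_trans : transitive lt).
Hypothesis lt_total : forall a b, a != b -> lt a b || lt b a.
Hypothesis sc : order_consistent e lt cls.

Lemma lt_asym a b : lt a b -> ~~ lt b a.
Proof. by move=> ab; apply/negP => /(lt_trans ab); rewrite lt_irr. Qed.

Lemma lt_neq a b : lt a b -> a != b.
Proof. by apply: contraTneq => ->; rewrite lt_irr. Qed.

Lemma lt_of_nlt a b : a != b -> ~~ lt a b -> lt b a.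
Proof. by move/lt_total; case: (lt a b). Qed.

Lemma skipped_class_neq r s t : lt r s -> lt s t -> e r t ->
  ~~ e r s -> ~~ e s t -> cls s != cls r.
Proof.
move=> rs st rt nrs nst; have [h _] := sc rs st rt.
by apply: contra nst => /eqP/esym; apply: h.
Qed.

Lemma skipped_class_eq r s t : lt r s -> lt s t -> e r t ->
  ~~ e r s -> ~~ e s t -> cls r = cls t.
Proof.
move=> rs st rt nrs nst; have [_ h] := sc rs st rt.
apply: I2_eq_of_neq (skipped_class_neq rs st rt nrs nst) _.
by apply: contra nrs => /eqP; apply: h.
Qed.

Lemma neighbor_above_class v n m : e v n -> e v m -> lt v n -> lt n m ->
  cls n != cls v.
Proof.
move=> vn vm vlt nm; apply/eqP => h; have [h' _] := sc vlt nm vm.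
by apply: (no_triangle irr_e acyc_e vn (h' (esym h))); rewrite sym_e.
Qed.

Lemma neighbor_below_class v n m : e v n -> e v m -> lt n m -> lt m v ->
  cls m != cls v.
Proof.
move=> vn vm nm mlt; apply/eqP => h.
have nv : e n v by rewrite sym_e.
have [_ h'] := sc nm mlt nv.
by apply: (no_triangle irr_e acyc_e (h' h) _ vn); rewrite sym_e.
Qed.

Lemma ordered_pair (B : {set T}) : 1 < #|B| ->
  exists n m, [/\ n \in B, m \in B & lt n m].
Proof.
case/card_gt1P => n [m [nB mB /lt_total/orP [nm|mn]]]; first by exists n, m.
by exists m, n.
Qed.

Lemma neighbors_in_class_le2 v (A : {set T}) :
  {in A, forall a, e v a /\ cls a = cls v} -> #|A| <= 2.
Proof.
move=> hA; rewrite leqNgt; apply/negP => A3.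
have [above|below] : 1 < #|A :&: [set u | lt v u]| \/ 1 < #|A :\: [set u | lt v u]|.
  by move: A3; rewrite -(cardsID [set u | lt v u] A); lia.
- have [n [m [/setIP [nA] + /setIP [mA _] nm]]] := ordered_pair above.
  rewrite inE => vn; have [[vn' cn] [vm _]] := (hA n nA, hA m mA).
  by move: (neighbor_above_class vn' vm vn nm); rewrite cn eqxx.
- have [n [m [/setDP [nA _] /setDP [mA] + nm]]] := ordered_pair below.
  have [[vn _] [vm cm]] := (hA n nA, hA m mA).
  rewrite inE => /(lt_of_nlt (edge_neq irr_e vm)) mv.
  by move: (neighbor_below_class vn vm nm mv); rewrite cm eqxx.
Qed.

Lemma class_neighbor_over_edge v x y a : e x y -> lt x v -> lt v y ->
  ~~ e v x -> ~~ e v y -> e v a -> ~~ e a x -> ~~ e a y -> cls a = cls v.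
Proof.
move=> xy xv vy nvx nvy va nax nay.
have nxv : ~~ e x v by rewrite sym_e.
have cxv : cls x != cls v by rewrite eq_sym (skipped_class_neq xv vy xy nxv nvy).
case/orP: (lt_total (neq_of_edge_nonedge va nvx)) => [ax|xa].
  by apply: (skipped_class_eq ax xv); rewrite // sym_e.
case/orP: (lt_total (neq_of_edge_nonedge va nvy)) => [ay|ya].
  apply: I2_eq_of_neq cxv; rewrite eq_sym.
  by apply: (skipped_class_neq xa ay xy); rewrite // sym_e.
by apply/esym/(skipped_class_eq vy ya va nvy); rewrite sym_e.
Qed.

Lemma no_edge_over v x y : 4 <= deg e v -> e x y -> lt x v -> lt v y ->
  ~~ e v x -> ~~ e v y -> False.
Proof.
move=> dv xy xv vy nvx nvy; rewrite /deg in dv.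
pose N := [set u | e v u]; pose B := [set u | e u x || e u y].
have vx : v != x by rewrite eq_sym lt_neq.
have touching :=
  neighbors_touching_edge_le1 sym_e irr_e acyc_e xy vx (lt_neq vy) nvx nvy.
have clean : #|N :\: B| <= 2.
  apply: (@neighbors_in_class_le2 v) => a.
  rewrite !inE negb_or => /andP [/andP [nax nay] va].
  by split=> //; apply: (class_neighbor_over_edge xy xv vy).
by move: dv touching; rewrite -/N -/B -(cardsID B N); lia.
Qed.

Lemma class_neighbor_of_fork v0 v2 x y n : e v0 v2 -> e v0 x -> e v0 y ->
  ~~ e v2 x -> ~~ e v2 y -> lt x v2 -> lt v2 y -> lt v0 v2 ->
  e v2 n -> n != v0 -> cls n = cls v2.
Proof.
move=> e02 e0x e0y n2x n2y x2 y2 l02 e2n nv0.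
have c02 : cls v0 != cls v2.
  by apply: contra n2y => /eqP; have [h _] := sc l02 y2 e0y; apply: h.
have n0n : ~~ e v0 n.
  by apply/negP => e0n; apply: (no_triangle irr_e acyc_e e2n _ e02); rewrite sym_e.
have nonadj z : e v0 z -> v2 != z -> ~~ e n z.
  move=> e0z v2z; apply: contra nv0 => enz; apply/eqP.
  by apply: (common_neighbor_unique sym_e irr_e acyc_e e2n enz _ e0z); rewrite // sym_e.
have nnx : ~~ e n x by rewrite nonadj // eq_sym lt_neq.
have nny : ~~ e n y by rewrite nonadj // lt_neq.
case/orP: (lt_total nv0) => [n0|l0n].
  have n2 : lt n v2 := lt_trans n0 l02.
  case/orP: (lt_total (neq_of_edge_nonedge e2n n2x)) => [nx|xn].
    by apply: (skipped_class_eq nx x2 _ nnx); rewrite // sym_e.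
  have ex0 : e x v0 by rewrite sym_e.
  have nxn : ~~ e x n by rewrite sym_e.
  have nn0 : ~~ e n v0 by rewrite sym_e.
  apply: I2_eq_of_neq c02; rewrite -(skipped_class_eq xn n0 ex0 nxn nn0) eq_sym.
  exact: (skipped_class_neq xn n0 ex0 nxn nn0).
case/orP: (lt_total (neq_of_edge_nonedge e2n n2y)) => [ny|yn].
  apply: I2_eq_of_neq c02; rewrite eq_sym.
  by apply: (skipped_class_neq l0n ny e0y n0n nny).
by apply/esym/(skipped_class_eq y2 yn e2n n2y); rewrite sym_e.
Qed.

Lemma no_fork_over v0 v2 x y : 4 <= deg e v2 -> e v0 v2 -> e v0 x -> e v0 y ->
  ~~ e v2 x -> ~~ e v2 y -> lt x v2 -> lt v2 y -> lt v0 v2 -> False.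
Proof.
move=> dv e02 e0x e0y n2x n2y x2 y2 l02; rewrite /deg in dv.
have v0N : v0 \in [set u | e v2 u] by rewrite inE sym_e.
have le2 : #|[set u | e v2 u] :\ v0| <= 2.
  apply: (@neighbors_in_class_le2 v2) => n; rewrite !inE => /andP [nv0 e2n].
  by split=> //; apply: (class_neighbor_of_fork e02 e0x e0y n2x n2y x2 y2 l02).
by move: dv; rewrite (cardsD1 v0) v0N; lia.
Qed.

Lemma no_path_around v x p : 4 <= deg e v -> path e x p ->
  all (fun u => (u != v) && ~~ e v u) (x :: p) -> lt x v != lt (last x p) v ->
  False.
Proof.
move=> dv; elim: p x => [|z p IH] x /=; first by rewrite eqxx.
case/andP=> xz pz /and3P [/andP [xv nvx] Qz Qp] side.
case: (eqVneq (lt x v) (lt z v)) => [same|switch].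
  by apply: (IH z) => //=; rewrite ?Qz -?same.
have [zv nvz] := andP Qz.
have zside : lt z v = ~~ lt x v by move: switch; case: (lt x v); case: (lt z v).
case/orP: (lt_total xv) => [xlt|vlt].
  by apply: (no_edge_over dv xz xlt (lt_of_nlt zv _) nvx nvz); rewrite zside xlt.
have zlt : lt z v by rewrite zside lt_asym.
by apply: (no_edge_over dv _ zlt vlt nvz nvx); rewrite sym_e.
Qed.

Lemma no_nexus_from_below v0 v1 v2 v3 : lt v1 v2 -> lt v2 v3 ->
  4 <= deg e v2 -> lt v0 v2 -> ~ nexus e v0 v1 v2 v3.
Proof.
move=> l12 l23 dv l02 [/= uq [p1 [p2 [p3 [[pp1 l1 up1] P2 [pp3 l3 up3] [d12 _ d23]]]]]].
move: uq; rewrite !inE !negb_or => /and4P [/and3P [n01 n02 n03] _ _ _].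
have Q1 := disjoint_branch_avoids sym_e acyc_e P2 pp1 up1 n02 d12.
have Q3 := disjoint_branch_avoids sym_e acyc_e P2 pp3 up3 n02 (all_notin_sym d23).
case: (boolP (e v0 v2)) => [e02|n02e]; last first.
  apply: (no_path_around dv pp3); first by rewrite /= n02 sym_e n02e Q3.
  by rewrite l3 l02 (negbTE (lt_asym l23)).
case: p1 pp1 up1 l1 Q1 {d12} => [_ _ /= l1|x p1 /= /andP [e0x pp1] _ l1 /andP [Qx Q1]].
  by rewrite l1 eqxx in n01.
case: p3 pp3 up3 l3 Q3 {d23} => [_ _ /= l3|y p3 /= /andP [e0y pp3] _ l3 /andP [Qy Q3]].
  by rewrite l3 eqxx in n03.
have [[_ n2x] [yv2 n2y]] := (andP Qx, andP Qy).
case: (boolP (lt x v2)) => [x2|nx2]; last first.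
  apply: (no_path_around dv pp1); first by rewrite /= Qx Q1.
  by rewrite l1 l12 (negbTE nx2).
case: (boolP (lt y v2)) => [y2|ny2].
  apply: (no_path_around dv pp3); first by rewrite /= Qy Q3.
  by rewrite l3 y2 (negbTE (lt_asym l23)).
exact: (no_fork_over dv e02 e0x e0y n2x n2y x2 (lt_of_nlt yv2 ny2) l02).
Qed.

End Order.

Lemma nexus_swap (T : finType) (e : rel T) v0 v1 v2 v3 :
  nexus e v0 v1 v2 v3 -> nexus e v0 v3 v2 v1.
Proof.
case=> uq [p1 [p2 [p3 [P1 P2 P3 [d12 d13 d23]]]]]; split.
  rewrite (_ : [:: v0; v3; v2; v1] = v0 :: rev [:: v1; v2; v3]) //.
  by rewrite cons_uniq mem_rev rev_uniq.
by exists p3, p2, p1; split=> //; split; apply: all_notin_sym.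
Qed.

Section Reversal.
Variables (T : finType) (e lt : rel T) (cls : T -> 'I_2).
Hypotheses (sym_e : symmetric e) (irr_e : irreflexive e) (acyc_e : acyclic e).
Hypotheses (lt_irr : irreflexive lt) (lt_trans : transitive lt).
Hypothesis lt_total : forall a b, a != b -> lt a b || lt b a.
Hypothesis sc : order_consistent e lt cls.

Lemma no_nexus v0 v1 v2 v3 : lt v1 v2 -> lt v2 v3 -> 4 <= deg e v2 ->
  ~ nexus e v0 v1 v2 v3.
Proof.
move=> l12 l23 dv nx; have [uq _] := nx.
have n02 : v0 != v2 by move: uq; rewrite /= !inE !negb_or => /and4P [/and3P []].
case/orP: (lt_total n02) => [l02|l20].
  exact: (no_nexus_from_below sym_e irr_e acyc_e lt_irr lt_trans lt_total sc
    l12 l23 dv l02).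
have gt_trans : transitive (fun a b => lt b a).
  by move=> b a c ab bc; apply: lt_trans bc ab.
have gt_total a b : a != b -> lt b a || lt a b by move/lt_total; rewrite orbC.
exact: (no_nexus_from_below sym_e irr_e acyc_e (lt := fun a b => lt b a) lt_irr
  gt_trans gt_total (order_consistent_rev sym_e sc) l23 l12 dv l20 (nexus_swap nx)).
Qed.

End Reversal.

Theorem corollaryA8 (T : finType) (e : rel T) (Htree : is_tree e)
    (Hpthin : pthin_eq e 2)
    (rk : T -> nat) (cls : T -> 'I_2) (Hrk : injective rk)
    (Hsc : strongly_consistent e rk cls)
    (v1 v2 v3 : T) (H12 : rk v1 < rk v2) (H23 : rk v2 < rk v3)
    (Hdeg : 4 <= deg e v2) :
  ~ exists v0 : T, nexus e v0 v1 v2 v3.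
Proof.
case: Htree => [[sym_e irr_e] _ acyc_e] [v0].
have rk_total a b : a != b -> (rk a < rk b) || (rk b < rk a).
  by rewrite -neq_ltn (inj_eq Hrk).
have rk_irr : irreflexive (fun a b => rk a < rk b) by move=> a; apply: ltnn.
have rk_trans : transitive (fun a b => rk a < rk b) by move=> ???; apply: ltn_trans.
exact: (no_nexus sym_e irr_e acyc_e rk_irr rk_trans rk_total Hsc H12 H23 Hdeg).
Qed.
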